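(* Let $s\in I(\Phi)$. If $C$ is an S-chamber for $s$, then $\mathcal B^s_\bullet(C)=\mathcal B(C)\cap\Phi^s_\bullet$ is a basis of simple roots of the root system $\Phi^s_\bullet$. Moreover, for every Weyl chamber $C'$ of the root system $\Phi^s_\bullet$ there is an S-chamber $C$ for $s$ with $\mathcal B(C)\cap\Phi^s_\bullet=\mathcal B(C')$.
   Context: $\Phi$ is a reduced crystallographic root system spanning a real Euclidean space $V$; $I(\Phi)$ is the set of orthogonal involutions of $V$ preserving $\Phi$. For $s\in I(\Phi)$: $\Phi^s_\bullet=\{\alpha:s\alpha=-\alpha\}$ (a root subsystem), $\Phi^s_\circ=\{\alpha:s\alpha=\alpha\}$, $\Phi^s_\star=\Phi\setminus(\Phi^s_\circ\cup\Phi^s_\bullet)$. For a Weyl chamber $C$ of $\Phi$ (connected component of the complement of the root hyperplanes), $\Phi^+(C)$ is its set of positive roots and $\mathcal B(C)$ its simple roots. $C$ is an S-chamber for $s$ if $s(\Phi^+(C)\cap\Phi^s_\star)\subseteq\Phi^+(C)$. *)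

From HB Require Import structures.
From mathcomp Require Import all_boot all_order all_algebra.
From mathcomp Require Import all_classical all_reals all_analysis.
Set Implicit Arguments. Unset Strict Implicit. Unset Printing Implicit Defensive.
Import Order.TTheory GRing.Theory Num.Theory.
Import numFieldNormedType.Exports.
Local Open Scope classical_set_scope.
Local Open Scope ring_scope.

Definition dotv (R : realType) (n : nat) (x y : 'rV[R]_n) : R := (x *m y^T) 0 0.

(* Reduced crystallographic root system spanning V. *)
Definition root_system (R : realType) (n : nat) (Phi : seq 'rV[R]_n) : Prop :=
  [/\ 0 \notin Phi,
      row_full (\matrix_(i < size Phi) nth 0 Phi i),
      (forall a b, a \in Phi -> b \in Phi ->
         b - (2 * dotv b a / dotv a a) *: a \in Phi),
      (forall a b, a \in Phi -> b \in Phi ->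
         (2 * dotv b a / dotv a a) \is a Num.int) &
      (forall a (c : R), a \in Phi -> c *: a \in Phi -> c = 1 \/ c = -1)].

(* I(Phi): orthogonal involutions of V preserving Phi (acting by x |-> x *m s). *)
Definition orth_invol (R : realType) (n : nat) (Phi : seq 'rV[R]_n) (s : 'M[R]_n) : Prop :=
  [/\ s *m s^T = 1%:M, s *m s = 1%:M & forall a, a \in Phi -> a *m s \in Phi].

Definition bullet (R : realType) (n : nat) (Phi : seq 'rV[R]_n) (s : 'M[R]_n) :=
  [seq a <- Phi | a *m s == - a].
Definition circ (R : realType) (n : nat) (Phi : seq 'rV[R]_n) (s : 'M[R]_n) :=
  [seq a <- Phi | a *m s == a].
Definition star (R : realType) (n : nat) (Phi : seq 'rV[R]_n) (s : 'M[R]_n) :=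
  [seq a <- Phi | (a *m s != a) && (a *m s != - a)].

Definition regular_set (R : realType) (n : nat) (Psi : seq 'rV[R]_n) : set 'rV[R]_n :=
  [set x | forall a, a \in Psi -> dotv x a != 0].

Definition weyl_chamber (R : realType) (n : nat) (Psi : seq 'rV[R]_n)
    (C : set 'rV[R]_n) : Prop :=
  exists2 x, regular_set Psi x & C = connected_component (regular_set Psi) x.

Definition pos_roots (R : realType) (n : nat) (Psi : seq 'rV[R]_n)
    (C : set 'rV[R]_n) : set 'rV[R]_n :=
  [set a | a \in Psi /\ forall x, C x -> 0 < dotv a x].

Definition simple_roots (R : realType) (n : nat) (Psi : seq 'rV[R]_n)
    (C : set 'rV[R]_n) : set 'rV[R]_n :=
  [set a | pos_roots Psi C a /\
           ~ (exists b c, [/\ pos_roots Psi C b, pos_roots Psi C c & a = b + c])].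

Definition S_chamber (R : realType) (n : nat) (Phi : seq 'rV[R]_n) (s : 'M[R]_n)
    (C : set 'rV[R]_n) : Prop :=
  weyl_chamber Phi C /\
  forall a, pos_roots Phi C a -> a \in star Phi s -> pos_roots Phi C (a *m s).

Definition simple_basis (R : realType) (n : nat) (Psi : seq 'rV[R]_n)
    (B : set 'rV[R]_n) : Prop :=
  exists2 C', weyl_chamber Psi C' & B = simple_roots Psi C'.

From HB Require Import structures.
From mathcomp Require Import all_boot all_order all_algebra.
From mathcomp Require Import all_classical all_reals all_analysis.
From mathcomp Require Import lra.
Import Order.TTheory GRing.Theory Num.Theory.
Import numFieldNormedType.Exports.
Local Open Scope classical_set_scope.
Local Open Scope ring_scope.

(* A Weyl chamber is the component of a regular point x, and its positive
   roots are those positive at x.  If s preserves positivity of the roots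
   of Phi_star at x, a positive bullet root that decomposes as b + c with b, c
   positive for Phi already decomposes inside Phi_bullet: otherwise neither
   b nor c is in Phi_bullet (a - b lies in Phi_bullet when b does), so b s and
   c s are positive at x, and then so is a s = - a, a contradiction.  Conversely,
   starting from a regular point y of Phi_bullet, move it to y + t w with w
   fixed by s and orthogonal to no root outside Phi_bullet: the move stays in
   the chamber of y for Phi_bullet (w is orthogonal to Phi_bullet), and for t
   large every root a outside Phi_bullet takes at x the sign of a.w, which is
   also the sign of (a s).w, so the resulting chamber is an S-chamber. *)

Set Implicit Arguments. Unset Strict Implicit. Unset Printing Implicit Defensive.

Lemma exists_dominating_scale (R : realType) (T : eqType) (l : seq T) (f p : T -> R) :
  exists2 t : R, 1 <= t & forall a, a \in l -> f a != 0 -> p a < t * `|f a|.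
Proof.
elim: l => [|b l [t t1 IH]]; first by exists 1.
exists (t + `|p b| / `|f b|); first by rewrite (le_trans t1) // lerDl divr_ge0.
move=> a; rewrite inE => /orP[/eqP-> fb|al fa].
  rewrite mulrDl divfK ?normr_eq0 //.
  apply: (le_lt_trans (ler_norm _)); rewrite ltrDr.
  by rewrite (lt_le_trans _ (ler_wpM2r (normr_ge0 _) t1)) // mul1r normr_gt0.
apply: (lt_le_trans (IH a al fa)); rewrite ler_wpM2r //.
by rewrite lerDl divr_ge0.
Qed.

Section InnerProduct.
Variables (R : realType) (n : nat).
Implicit Types (a b x y : 'rV[R]_n).

Lemma dotvE a x : dotv a x = \sum_(j < n) a 0 j * x 0 j.
Proof. by rewrite /dotv mxE; apply: eq_bigr => j _; rewrite mxE. Qed.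

Lemma dotvC a x : dotv a x = dotv x a.
Proof. by rewrite !dotvE; apply: eq_bigr => j _; rewrite mulrC. Qed.

Lemma dotvDl a b x : dotv (a + b) x = dotv a x + dotv b x.
Proof. by rewrite /dotv mulmxDl mxE. Qed.

Lemma dotvNl a x : dotv (- a) x = - dotv a x.
Proof. by rewrite /dotv mulNmx mxE. Qed.

Lemma dotvZl c a x : dotv (c *: a) x = c * dotv a x.
Proof. by rewrite /dotv -scalemxAl mxE. Qed.

Lemma dotvDr a x y : dotv a (x + y) = dotv a x + dotv a y.
Proof. by rewrite dotvC dotvDl !(dotvC _ a). Qed.

Lemma dotvZr c a x : dotv a (c *: x) = c * dotv a x.
Proof. by rewrite dotvC dotvZl dotvC. Qed.

Lemma dotv_sym_mx (s : 'M[R]_n) a x : s^T = s -> dotv (a *m s) x = dotv a (x *m s).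
Proof. by move=> sT; rewrite /dotv trmx_mul sT mulmxA. Qed.

Lemma dotvv_gt0 a : a != 0 -> 0 < dotv a a.
Proof.
move=> a0; rewrite dotvE; have [j aj] : exists j, a 0 j != 0.
  apply/existsP; apply: contraNT a0 => /existsPn a_eq0; apply/eqP/rowP => j.
  by rewrite mxE; apply/eqP; move: (a_eq0 j); rewrite negbK.
rewrite (bigD1 j) //= ltr_pwDl //; last first.
  by apply: sumr_ge0 => i _; rewrite -expr2 sqr_ge0.
by rewrite -expr2 exprn_even_gt0.
Qed.

Lemma dotv_continuous a : continuous (fun x : 'rV[R]_n => dotv a x).
Proof.
have -> : (fun x : 'rV[R]_n => dotv a x) =
          fun x => \sum_(j <- index_enum 'I_n) a 0 j * x 0 j.
  by apply: funext => x; rewrite dotvE.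
elim: (index_enum _) => [|j r IH].
  by under eq_fun do rewrite big_nil; apply: cst_continuous.
under eq_fun do rewrite big_cons.
move=> x; apply: (@continuousD _ _ _ (fun x : 'rV[R]_n => a 0 j * x 0 j)
                    (fun x => \sum_(j <- r) a 0 j * x 0 j)); last exact: IH.
apply: (@continuousM _ _ (fun _ => a 0 j) (fun x : 'rV[R]_n => x 0 j)).
  exact: cst_continuous.
exact: coord_continuous.
Qed.

(* Induction on l: if v is orthogonal to the new vector u, move to u + T v,
   with T so large that no old inner product can vanish. *)
Lemma exists_nonorthogonal (l : seq 'rV[R]_n) : (forall u, u \in l -> u != 0) ->
  exists v, forall u, u \in l -> dotv u v != 0.
Proof.
elim: l => [|u l IH] l_neq0; first by exists 0.
have [v Hv] := IH (fun w wl => l_neq0 w (@mem_behead _ (u :: l) w wl)).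
have [uv|/negPn/eqP uv0] := boolP (dotv u v != 0).
  by exists v => w; rewrite inE => /orP[/eqP->|/Hv].
have [T T1 HT] := exists_dominating_scale l (fun w => dotv w v) (fun w => `|dotv w u|).
exists (u + T *: v) => w; rewrite inE => /orP[/eqP->|wl].
  rewrite dotvDr dotvZr uv0 mulr0 addr0; apply: lt0r_neq0.
  by apply: dotvv_gt0; apply: l_neq0; rewrite mem_head.
rewrite dotvDr dotvZr -normr_eq0; apply: lt0r_neq0.
have T0 : 0 <= T by apply: le_trans T1.
have := HT w wl (Hv w wl); rewrite -{1}(ger0_norm T0) -normrM => dominated.
have := lerB_dist (T * dotv w v) (- dotv w u); rewrite opprK normrN addrC => h.
by rewrite addrC; apply: lt_le_trans h; rewrite addrC subr_gt0.
Qed.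

End InnerProduct.

Lemma sign_dominated (R : realType) (p c t : R) : `|p| < t * `|c| ->
  (0 < p + t * c) = (0 < c) /\ p + t * c != 0.
Proof.
move=> h; have h1 := ler_norm p; have h2 := ler_norm (- p); rewrite normrN in h2.
have [c0|c0|c0] := ltgtP c 0.
- rewrite (ltr0_norm c0) mulrN in h.
  have neg : p + t * c < 0 by nra.
  by split; [rewrite !ltNge (ltW neg) | rewrite lt_eqF].
- rewrite (gtr0_norm c0) in h; have pos : 0 < p + t * c by nra.
  by split; [apply/idP/idP | rewrite gt_eqF].
- by move: h; rewrite c0 normr0 mulr0 ltNge normr_ge0.
Qed.

Section Chambers.
Variables (R : realType) (n : nat).
Implicit Types (Psi : seq 'rV[R]_n) (a x y z : 'rV[R]_n).

Lemma regular_set_subseq Psi Psi' : {subset Psi' <= Psi} ->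
  regular_set Psi `<=` regular_set Psi'.
Proof. by move=> sub x rx a /sub; apply: rx. Qed.

(* The image of the component under the continuous map (dotv a) is an
   interval avoiding 0. *)
Lemma sign_dotv_component Psi a x z : a \in Psi ->
  connected_component (regular_set Psi) x z ->
  (0 < dotv a z) = (0 < dotv a x).
Proof.
move=> aP xz; set B := connected_component (regular_set Psi) x.
have Bx : B x.
  apply: connected_component_refl.
  by move: xz => /connected_component_sym /connected_component_sub.
have B_neq0 w : B w -> dotv a w != 0.
  by move=> /connected_component_sub Bw; rewrite dotvC; apply: Bw.
have itv : is_interval ((fun w => dotv a w) @` B).
  apply/connected_intervalP; apply: connected_continuous_connected.
    exact: component_connected.
  by apply: continuous_subspaceT => w; apply: dotv_continuous.
have no_sign_change u v : B u -> B v -> dotv a u < 0 -> 0 < dotv a v -> False.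
  move=> Bu Bv u0 v0.
  have [w Bw w0] : ((fun w => dotv a w) @` B) 0.
    by apply: (itv _ _ (imageP _ Bu) (imageP _ Bv)); rewrite !ltW.
  by move: (B_neq0 w Bw); rewrite w0 eqxx.
have := B_neq0 z xz; have := B_neq0 x Bx.
rewrite !neq_lt => /orP[]x0 /orP[]z0.
- by rewrite ltNge (ltW z0) ltNge (ltW x0).
- by case: (no_sign_change x z Bx xz x0 z0).
- by case: (no_sign_change z x xz Bx z0 x0).
- by rewrite x0 z0.
Qed.

Lemma pos_roots_componentP Psi x a : regular_set Psi x ->
  pos_roots Psi (connected_component (regular_set Psi) x) a <->
  a \in Psi /\ 0 < dotv a x.
Proof.
move=> rx; split; first by move=> [aP pos]; split => //; apply/pos/connected_component_refl.
by move=> [aP ax]; split => // z xz; rewrite (sign_dotv_component aP xz).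
Qed.

Lemma segment_connected_component (A : set 'rV[R]_n) y d :
  (forall t : R, 0 <= t <= 1 -> A (y + t *: d)) ->
  connected_component A y (y + d).
Proof.
move=> segA.
exists ((fun t : R => y + t *: d) @` [set` `[0:R, 1]]); last first.
  by exists 1; [rewrite /= in_itv /= lexx ler01 | rewrite scale1r].
split.
- by exists 0; [rewrite /= in_itv /= lexx ler01 | rewrite scale0r addr0].
- by move=> _ [t t01 <-]; apply: segA; move: t01; rewrite /= in_itv.
- apply: connected_continuous_connected; first exact: segment_connected.
  apply: continuous_subspaceT => t.
  apply: (@continuousD _ _ _ (fun _ => y) (fun t : R => t *: d)).
    exact: cst_continuous.
  exact: continuousZr_tmp.
Qed.

End Chambers.

Section Involution.
Variables (R : realType) (n : nat) (Phi : seq 'rV[R]_n) (s : 'M[R]_n).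
Implicit Types (a b c w x y : 'rV[R]_n).

Lemma bulletP a : reflect (a *m s = - a /\ a \in Phi) (a \in bullet Phi s).
Proof. by rewrite mem_filter; apply: (iffP andP) => -[/eqP]. Qed.

Lemma bullet_subset : {subset bullet Phi s <= Phi}.
Proof. by move=> a /bulletP[]. Qed.

Lemma mem_star a : a \in Phi -> a *m s != a -> a *m s != - a -> a \in star Phi s.
Proof. by move=> aP sa sNa; rewrite mem_filter sa sNa aP. Qed.

Lemma bullet_sub_closed a b c : a \in bullet Phi s -> b \in bullet Phi s ->
  c \in Phi -> a = b + c -> c \in bullet Phi s.
Proof.
move=> /bulletP[sa _] /bulletP[sb _] cP abc; apply/bulletP; split => //.
have -> : c = a - b by rewrite abc addrC addKr.
by rewrite mulmxBl sa sb opprK opprB addrC.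
Qed.

Lemma simple_roots_bullet_component x : regular_set Phi x ->
  (forall a, a \in star Phi s -> 0 < dotv a x -> 0 < dotv (a *m s) x) ->
  simple_roots Phi (connected_component (regular_set Phi) x)
    `&` [set a | a \in bullet Phi s]
  = simple_roots (bullet Phi s)
      (connected_component (regular_set (bullet Phi s)) x).
Proof.
move=> rx s_pos.
have rbx := regular_set_subseq bullet_subset rx.
have bullet_or_s_pos c : c \in Phi -> 0 < dotv c x ->
    c \in bullet Phi s \/ 0 < dotv (c *m s) x.
  move=> cP c0; have [sc|sc] := eqVneq (c *m s) (- c).
    by left; apply/bulletP.
  have [sc'|sc'] := eqVneq (c *m s) c; first by right; rewrite sc'.
  by right; apply: s_pos => //; apply: mem_star.
apply/seteqP; split => a /=.
  move=> [[/(pos_roots_componentP _ rx) [aP a0] indec] ab]; split.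
    exact/(pos_roots_componentP _ rbx).
  move=> [b [c [/(pos_roots_componentP _ rbx) [bb b0]
                /(pos_roots_componentP _ rbx) [cb c0] abc]]].
  by apply: indec; exists b, c; split => //; apply/(pos_roots_componentP _ rx);
    split => //; apply: bullet_subset.
move=> [/(pos_roots_componentP _ rbx) [ab a0] indec]; split => //; split.
  by apply/(pos_roots_componentP _ rx); split => //; apply: bullet_subset.
move=> [b [c [/(pos_roots_componentP _ rx) [bP b0]
              /(pos_roots_componentP _ rx) [cP c0] abc]]].
have decomposes_in_bullet : b \in bullet Phi s -> c \in bullet Phi s -> False.
  move=> bb cb; apply: indec; exists b, c.
  by split => //; apply/(pos_roots_componentP _ rbx).
case: (bullet_or_s_pos b bP b0) => [bb|sb0].
  exact: decomposes_in_bullet (bullet_sub_closed ab bb cP abc).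
case: (bullet_or_s_pos c cP c0) => [cb|sc0].
  rewrite addrC in abc.
  exact: decomposes_in_bullet (bullet_sub_closed ab cb bP abc) cb.
have : 0 < dotv (a *m s) x by rewrite abc mulmxDl dotvDl addr_gt0.
by case/bulletP: ab => -> _; rewrite dotvNl oppr_gt0 ltNge (ltW a0).
Qed.

Lemma S_chamber_simple_basis C : S_chamber Phi s C ->
  simple_basis (bullet Phi s) (simple_roots Phi C `&` [set a | a \in bullet Phi s]).
Proof.
move=> [[x rx ->] s_pos].
exists (connected_component (regular_set (bullet Phi s)) x).
  by exists x => //; apply: regular_set_subseq rx; apply: bullet_subset.
apply: simple_roots_bullet_component => // a ast a0.
have aP : a \in Phi by move: ast; rewrite mem_filter => /andP[].
have /s_pos : pos_roots Phi (connected_component (regular_set Phi) x) a.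
  exact/(pos_roots_componentP _ rx).
by move=> /(_ ast) /(pos_roots_componentP _ rx) [].
Qed.

Hypotheses (sT : s^T = s) (ss : s *m s = 1%:M).

Lemma dotv_fixed w a : w *m s = w -> dotv (a *m s) w = dotv a w.
Proof. by move=> sw; rewrite (dotv_sym_mx _ _ sT) sw. Qed.

Lemma dotv_fixed_anti w a : w *m s = w -> a *m s = - a -> dotv a w = 0.
Proof.
move=> sw sa; have : dotv a w = - dotv a w by rewrite -{1}(dotv_fixed a sw) sa dotvNl.
by move/eqP; rewrite -subr_eq0 opprK -mulr2n mulrn_eq0 => /eqP.
Qed.

(* Symmetrise a vector orthogonal to none of the a + a s, a outside Phi_bullet. *)
Lemma exists_fixed_nonorthogonal :
  exists2 w, w *m s = w & forall a, a \in Phi -> a *m s != - a -> dotv a w != 0.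
Proof.
pose l := [seq a + a *m s | a <- Phi & a *m s != - a].
have l_neq0 u : u \in l -> u != 0.
  move=> /mapP [a]; rewrite mem_filter => /andP[sa _] ->.
  by apply: contra sa; rewrite addrC addr_eq0.
have [v Hv] := exists_nonorthogonal l_neq0.
exists (v + v *m s); first by rewrite mulmxDl -mulmxA ss mulmx1 addrC.
move=> a aP sa; rewrite dotvDr -(dotv_sym_mx _ _ sT) -dotvDl.
by apply: Hv; apply/mapP; exists a => //; rewrite mem_filter sa.
Qed.

Lemma exists_S_regular_point y : regular_set (bullet Phi s) y ->
  exists x, [/\ regular_set Phi x,
    connected_component (regular_set (bullet Phi s)) y x &
    forall a, a \in star Phi s -> 0 < dotv a x -> 0 < dotv (a *m s) x].
Proof.
move=> ry; have [w sw w_nonorth] := exists_fixed_nonorthogonal.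
have [t t1 Ht] := exists_dominating_scale Phi (fun a => dotv a w)
                    (fun a => `|dotv a y| + `|dotv (a *m s) y|).
pose x := y + t *: w.
have dx a : dotv a x = dotv a y + t * dotv a w by rewrite dotvDr dotvZr.
have sign_x a : a \in Phi -> a *m s != - a ->
    (0 < dotv a x) = (0 < dotv a w) /\ dotv a x != 0.
  move=> aP sa; rewrite dx; apply: sign_dominated.
  by apply: le_lt_trans (Ht a aP (w_nonorth a aP sa)); rewrite lerDl.
have sign_sx a : a \in Phi -> a *m s != - a ->
    (0 < dotv (a *m s) x) = (0 < dotv a w).
  move=> aP sa; rewrite dx (dotv_fixed a sw); apply: (proj1 (sign_dominated _)).
  by apply: le_lt_trans (Ht a aP (w_nonorth a aP sa)); rewrite lerDr.
exists x; split.
- move=> a aP; rewrite dotvC.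
  have [sa|sa] := eqVneq (a *m s) (- a); last exact: (sign_x a aP sa).2.
  rewrite dx (dotv_fixed_anti sw sa) mulr0 addr0 dotvC.
  by apply: ry; apply/bulletP.
- apply: segment_connected_component => tau _ a ab; case/bulletP: (ab) => sa _.
  rewrite dotvC dotvDr dotvZr dotvZr (dotv_fixed_anti sw sa) !mulr0 addr0 dotvC.
  exact: ry.
- move=> a; rewrite mem_filter => /andP[/andP[_ sa] aP].
  by rewrite (sign_sx a aP sa) (sign_x a aP sa).1.
Qed.

Lemma exists_S_chamber C' : weyl_chamber (bullet Phi s) C' ->
  (forall a, a \in Phi -> a *m s \in Phi) ->
  exists2 C, S_chamber Phi s C &
    simple_roots Phi C `&` [set a | a \in bullet Phi s]
    = simple_roots (bullet Phi s) C'.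
Proof.
move=> [y ry ->] sPhi; have [x [rx yx s_pos]] := exists_S_regular_point ry.
exists (connected_component (regular_set Phi) x).
  split; first by exists x.
  move=> a /(pos_roots_componentP _ rx) [aP a0] ast.
  by apply/(pos_roots_componentP _ rx); split; [apply: sPhi | apply: s_pos].
by rewrite simple_roots_bullet_component // (same_connected_component yx).
Qed.

End Involution.

Lemma orth_invol_sym (R : realType) (n : nat) (Phi : seq 'rV[R]_n) (s : 'M[R]_n) :
  orth_invol Phi s -> s^T = s.
Proof. by move=> [sst ss _]; rewrite -[s^T]mul1mx -ss -mulmxA sst mulmx1. Qed.

Unset Implicit Arguments.

Theorem proposition2p32 (R : realType) (n : nat) (Phi : seq 'rV[R]_n) (s : 'M[R]_n) :
  root_system Phi -> orth_invol Phi s ->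
  (forall C, S_chamber Phi s C ->
     simple_basis (bullet Phi s)
       (simple_roots Phi C `&` [set a | a \in bullet Phi s])) /\
  (forall C', weyl_chamber (bullet Phi s) C' ->
     exists2 C, S_chamber Phi s C &
       simple_roots Phi C `&` [set a | a \in bullet Phi s]
       = simple_roots (bullet Phi s) C').
Proof.
move=> _ sI; have sT := orth_invol_sym sI; case: sI => _ ss sPhi.
split => [C|C' C'_chamber]; first exact: S_chamber_simple_basis.
exact: exists_S_chamber.
Qed.
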